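(* Let $\mathbb{K}$ be a field of characteristic zero and let $\mathbb{D}=\{\nabla^{a(1)}_{i(1)},\ldots,\nabla^{a(m)}_{i(m)}\}$ be a finite set of homogeneous locally nilpotent derivations of $\mathbb{K}[x_1,\ldots,x_n]$ (defined below). Let $\mathbb{D}'\subseteq\mathbb{D}$ be the set of those derivations whose vertices in the graph $\Gamma(\mathbb{D})$ lie on some oriented cycle, and $\mathbb{D}''=\mathbb{D}\setminus\mathbb{D}'$. Assume that all derivations in $\mathbb{D}'$ have weight zero. Let $D_1\in\mathbb{D}'$, $D_2\in\mathbb{D}''$ and $D:=[D_1,D_2]$. Then either $D=0$, or $D$ is (a nonzero scalar multiple of) a derivation of the form $\nabla^b_j$ and the vertex corresponding to $D$ in the graph $\Gamma(\mathbb{D}\cup\{D\})$ is not contained in any oriented cycle.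
   Context: $\partial_i=\partial/\partial x_i$. For $1\le i\le n$ and $a\in\mathbb{Z}^n_{\ge0}$ with $a_i=0$, $\nabla^a_i:=x_1^{a_1}\cdots x_{i-1}^{a_{i-1}}x_{i+1}^{a_{i+1}}\cdots x_n^{a_n}\partial_i$; its weight is $\sum_ja_j-1$ (so weight zero derivations are $x_j\partial_i$ with $j\neq i$). For a finite set $\mathbb{D}=\{\nabla^{a(1)}_{i(1)},\ldots,\nabla^{a(m)}_{i(m)}\}$, the directed graph $\Gamma(\mathbb{D})$ has vertices $1,\ldots,m$ (vertex $s$ corresponding to $\nabla^{a(s)}_{i(s)}$), and $(s,j)$ is an edge if and only if the $i(s)$-th coordinate of $a(j)$ is positive. $[D_1,D_2]=D_1\circ D_2-D_2\circ D_1$. *)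

From mathcomp Require Import all_boot all_order all_algebra.
From mathcomp Require Import mpoly.
Set Implicit Arguments. Unset Strict Implicit. Unset Printing Implicit Defensive.
Import GRing.Theory.
Local Open Scope ring_scope.

(* A derivation nabla^a_i is encoded by its data (a, i) : 'X_{1..n} * 'I_n,
   with a i = 0 required separately. *)
Definition dder (n : nat) := ('X_{1..n} * 'I_n)%type.

Definition nabla (K : fieldType) (n : nat) (a : 'X_{1..n}) (i : 'I_n)
  (p : {mpoly K[n]}) : {mpoly K[n]} := 'X_[a] * mderiv i p.

Definition nablaD (K : fieldType) (n : nat) (d : dder n) (p : {mpoly K[n]}) :=
  nabla d.1 d.2 p.

(* weight of nabla^a_i is mdeg a - 1; weight zero means mdeg a = 1 *)
Definition weight0 (n : nat) (d : dder n) : bool := mdeg d.1 == 1%N.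

Definition Gamma (n : nat) (V : finType) (f : V -> dder n) : rel V :=
  fun s j => (0 < (f j).1 (f s).2)%N.

Definition on_cycle (n : nat) (V : finType) (f : V -> dder n) (s : V) : bool :=
  [exists j, Gamma f s j && connect (Gamma f) j s].

Definition labD (n : nat) (Dl : seq (dder n)) : 'I_(size Dl) -> dder n :=
  fun s => tnth (in_tuple Dl) s.

Definition labDext (n : nat) (Dl : seq (dder n)) (d : dder n)
  : option 'I_(size Dl) -> dder n :=
  fun o => oapp (@labD n Dl) d o.
Arguments labD {n} Dl s.
Arguments labDext {n} Dl d o.

(* Write D1 = x_k d_i and D2 = x^b d_j. Then
   [D1, D2] = b_i x^(b + e_k - e_i) d_j - [k = j] x^b d_i.
   If b_i > 0 and k = j, then D1 -> D2 -> D1 would put D2 on a cycle, so at most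
   one term survives. In either case the new vertex only receives edges from
   vertices reaching D2 and only sends edges to vertices reachable from D2 in
   at least one step, and it carries no loop; contracting it onto D2 maps any
   cycle through it to a cycle through D2. *)

From mathcomp Require Import all_boot all_order all_algebra.
From mathcomp Require Import mpoly.
From mathcomp Require Import ring.
Set Implicit Arguments. Unset Strict Implicit. Unset Printing Implicit Defensive.
Import GRing.Theory.
Local Open Scope ring_scope.

Lemma connect_homo (V W : finType) (e : rel V) (e' : rel W) (phi : V -> W) :
  (forall u v, e u v -> connect e' (phi u) (phi v)) ->
  forall u v, connect e u v -> connect e' (phi u) (phi v).
Proof.
move=> hom u v /connectP [p pth ->]; elim: p u pth => [|w p IHp] u /=.
  by rewrite connect0.
by case/andP=> euw pw; apply: connect_trans (hom _ _ euw) (IHp _ pw).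
Qed.

Lemma no_cycle_through_new_vertex (V : finType) (e : rel V)
    (e' : rel (option V)) (s : V) :
  (forall u v, e' (Some u) (Some v) = e u v) ->
  (forall u, e' (Some u) None -> connect e u s) ->
  (forall v, e' None (Some v) -> exists2 w, e s w & connect e w v) ->
  ~~ e' None None ->
  ~~ [exists w, e s w && connect e w s] ->
  ~~ [exists w, e' None w && connect e' w None].
Proof.
move=> e'E inE outE loopN s_off.
apply/existsP=> -[[t|] /andP [et ct]]; last first.
  by rewrite et in loopN.
have collapse u v : e' u v -> connect e (oapp id s u) (oapp id s v).
  case: u v => [u|] [v|] /=; rewrite ?e'E.
  - exact: connect1.
  - exact: inE.
  - by case/outE=> w sw wv; apply: connect_trans (connect1 sw) wv.
  - by move=> eNN; rewrite eNN in loopN.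
have /= ts := connect_homo collapse ct.
case/outE: et => w sw wt; case/existsP: s_off; exists w.
by rewrite sw; apply: connect_trans wt ts.
Qed.

Lemma nabla_commutator_weight0 (K : fieldType) n (k i j : 'I_n)
    (b : 'X_{1..n}) (p : {mpoly K[n]}) :
  nabla U_(k) i (nabla b j p) - nabla b j (nabla U_(k) i p) =
  (b i)%:R *: nabla (U_(k) + (b - U_(i)))%MM j p - (k == j)%:R *: nabla b i p.
Proof.
have U_kk : (U_(k) - U_(k))%MM = 0%MM.
  by apply/mnmP=> l; rewrite mnmBE subnn mnmE.
rewrite /nabla !mderivM (mderiv_comm j i p) !mderivX mpolyXD mnm1E !scaler_nat.
case: eqP => [<-|_]; last by rewrite !mulr0n mul0r add0r subr0; ring.
by rewrite U_kk mpolyX0 !mulr1n; ring.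
Qed.

Section CommutatorVertex.

Variables (n : nat) (Dl : seq (dder n)) (s1 s2 : 'I_(size Dl)).
Variables (k i j : 'I_n) (b : 'X_{1..n}).
Hypotheses (E1 : labD Dl s1 = (U_(k)%MM, i)) (E2 : labD Dl s2 = (b, j)).
Hypothesis s2_off : ~~ on_cycle (labD Dl) s2.

Local Notation G := (Gamma (labD Dl)).

Lemma Gamma_s1_s2 : G s1 s2 = (0 < b i)%N.
Proof. by rewrite /Gamma E1 E2. Qed.

Lemma Gamma_s2_s1 : G s2 s1 = (k == j).
Proof. by rewrite /Gamma E1 E2 /= mnm1E; case: (k == j). Qed.

Lemma Gamma_to_s1 t : G t s1 = (k == (labD Dl t).2).
Proof. by rewrite /Gamma E1 /= mnm1E; case: (k == _). Qed.

Lemma Gamma_to_s2 t : G t s2 = (0 < b (labD Dl t).2)%N.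
Proof. by rewrite /Gamma E2. Qed.

Lemma Gamma_from_s1 t : G s1 t = (0 < (labD Dl t).1 i)%N.
Proof. by rewrite /Gamma E1. Qed.

Lemma Gamma_from_s2 t : G s2 t = (0 < (labD Dl t).1 j)%N.
Proof. by rewrite /Gamma E2. Qed.

Lemma Gamma_s1_s2_neq : (0 < b i)%N -> k != j.
Proof.
move=> bi_gt0; apply: contra s2_off => kj; apply/existsP; exists s1.
by rewrite Gamma_s2_s1 kj connect1 // Gamma_s1_s2.
Qed.

Lemma off_cycle_ext_nabla_b_i :
  b i = 0%N -> k = j -> ~~ on_cycle (labDext Dl (b, i)) None.
Proof.
move=> bi0 kj; apply: (@no_cycle_through_new_vertex _ G _ s2) s2_off => //.
- by move=> u ut; apply: connect1; rewrite Gamma_to_s2.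
- move=> v vt; exists s1; first by rewrite Gamma_s2_s1 kj.
  by apply: connect1; rewrite Gamma_from_s1.
- by rewrite /Gamma /= bi0.
Qed.

Lemma off_cycle_ext_nabla_shift_j :
  (0 < b i)%N -> b j = 0%N ->
  ~~ on_cycle (labDext Dl ((U_(k) + (b - U_(i)))%MM, j)) None.
Proof.
move=> bi_gt0 bj0; have /negPf kj := Gamma_s1_s2_neq bi_gt0.
apply: (@no_cycle_through_new_vertex _ G _ s2) s2_off => //.
- move=> t; rewrite {1}/Gamma /= mnmDE mnmBE mnm1E.
  case: eqP => [kt _|_ /= bt].
  + apply: (@connect_trans _ _ s1); apply: connect1.
      by rewrite Gamma_to_s1 kt.
    by rewrite Gamma_s1_s2.
  + by apply: connect1; rewrite Gamma_to_s2; move: bt; case: (b _).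
- by move=> v vt; exists v => //; rewrite Gamma_from_s2.
- by rewrite /Gamma /= mnmDE mnmBE mnm1E bj0 kj.
Qed.

End CommutatorVertex.

Theorem lemma2 (K : fieldType) (n : nat) (Dl : seq (dder n))
  (hchar : [pchar K] =i pred0)
  (huniq : uniq Dl)
  (hwf : forall d, d \in Dl -> d.1 d.2 = 0%N)
  (hw0 : forall s : 'I_(size Dl), on_cycle (labD Dl) s -> weight0 (labD Dl s))
  (s1 s2 : 'I_(size Dl))
  (h1 : on_cycle (labD Dl) s1) (h2 : ~~ on_cycle (labD Dl) s2) :
  let D := fun p : {mpoly K[n]} =>
    nablaD (labD Dl s1) (nablaD (labD Dl s2) p)
    - nablaD (labD Dl s2) (nablaD (labD Dl s1) p) in
  (forall p, D p = 0) \/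
  (exists (c : K) (b : 'X_{1..n}) (j : 'I_n),
     [/\ c != 0, b j = 0%N,
         (forall p, D p = c *: nabla b j p)
       & ~~ on_cycle (labDext Dl (b, j)) None]).
Proof.
move=> D; have /mdeg1P [k /eqP ek] := hw0 _ h1.
case E1: (labD Dl s1) ek => [a i] /= ek; subst a.
case E2: (labD Dl s2) => [b j].
have bj0 : b j = 0%N.
  by have := hwf _ (mem_tnth s2 (in_tuple Dl)); rewrite -/(labD Dl s2) E2.
have DE p : D p = (b i)%:R *: nabla (U_(k) + (b - U_(i)))%MM j p
                  - (k == j)%:R *: nabla b i p.
  by rewrite /D /nablaD E1 E2 nabla_commutator_weight0.
have [bi0|bi_gt0] := posnP (b i).
  have [kj|/negPf kj] := eqVneq k j; last first.
    by left=> p; rewrite DE bi0 kj !scale0r subr0.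
  right; exists (-1), b, i; split => //.
  - by rewrite oppr_eq0 oner_eq0.
  - by move=> p; rewrite DE bi0 kj eqxx scale0r sub0r scale1r scaleN1r.
  - exact: off_cycle_ext_nabla_b_i E1 E2 h2 bi0 kj.
have kj := negPf (Gamma_s1_s2_neq E1 E2 h2 bi_gt0).
right; exists (b i)%:R, (U_(k) + (b - U_(i)))%MM, j; split.
- by move/pcharf0P: hchar => ->; rewrite -lt0n.
- by rewrite mnmDE mnmBE mnm1E bj0 kj.
- by move=> p; rewrite DE kj scale0r subr0.
- exact: off_cycle_ext_nabla_shift_j E1 E2 h2 bi_gt0 bj0.
Qed.
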